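(* For every positive integer $d$, there exists a binary matrix $M$ such that $R_{binary}(M)\ge 4d$ and $R_{\mathbb{R}}(M)=3d$.
   Context: $R_{\mathbb{R}}$ is the usual rank over the reals. For a binary $n\times m$ matrix $M$, the binary rank $R_{binary}(M)$ is the least $k$ such that $M=UV$ with $U\in\{0,1\}^{n\times k}$, $V\in\{0,1\}^{k\times m}$, product computed with ordinary arithmetic. *)

From mathcomp Require Import all_boot all_order all_algebra.
From mathcomp Require Import Rstruct.
From Stdlib Require Rdefinitions.
Set Implicit Arguments. Unset Strict Implicit. Unset Printing Implicit Defensive.
Import GRing.Theory.
Local Open Scope ring_scope.

Definition realmx (n m : nat) (M : 'M[bool]_(n, m)) : 'M[Rdefinitions.R]_(n, m) :=
  map_mx (fun b : bool => (nat_of_bool b)%:R) M.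

Definition real_rank (n m : nat) (M : 'M[bool]_(n, m)) : nat := \rank (realmx M).

(* M = U V with U, V binary, product computed in ordinary (nat) arithmetic. *)
Definition binary_factorization (n m k : nat) (M : 'M[bool]_(n, m))
  (U : 'M[bool]_(n, k)) (V : 'M[bool]_(k, m)) : Prop :=
  forall i j, nat_of_bool (M i j) = (\sum_(l < k) U i l * V l j)%N.

(* R_binary(M) >= r : since R_binary(M) is the least k admitting a binary
   factorization (one always exists, e.g. k = n with U = I), this holds iff
   every binary factorization M = U V has inner dimension k >= r. *)
Definition binary_rank_ge (n m : nat) (M : 'M[bool]_(n, m)) (r : nat) : Prop :=
  forall (k : nat) (U : 'M[bool]_(n, k)) (V : 'M[bool]_(k, m)),
    binary_factorization M U V -> (r <= k)%N.

(** The 4 x 4 matrix whose rows are the edges of a 4-cycle (row i is the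
    indicator of the vertices i and i+1 mod 4) has real rank 3, since the
    alternating sum of its rows vanishes, but binary rank 4: its diagonal is
    a fooling set, because two distinct edges never contain each other's
    first vertex, so no all-ones rectangle of a binary factorization can
    cover two diagonal entries.  Real rank and diagonal fooling sets are
    both additive under block-diagonal sums, so d diagonal copies of this
    matrix have binary rank at least 4d and real rank 3d. *)

From Pilot Require Import Defs.
From mathcomp Require Import all_boot all_order all_algebra.
From mathcomp Require Import Rstruct ring.

Set Implicit Arguments.
Unset Strict Implicit.
Unset Printing Implicit Defensive.
Import GRing.Theory.
Local Open Scope ring_scope.

Lemma binary_factorizationE n m k (M : 'M[bool]_(n, m)) U (V : 'M_(k, m)) :
  binary_factorization M U V -> forall i j, M i j = [exists l, U i l && V l j].
Proof.
move=> MUV i j; have -> : M i j = (nat_of_bool (M i j) != 0)%N by case: (M i j).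
rewrite MUV sum_nat_eq0 negb_forall; apply: eq_existsb => l.
by case: (U i l); case: (V l j).
Qed.

Definition fooling_set n m p (M : 'M[bool]_(n, m)) (r : 'I_p -> 'I_n)
    (c : 'I_p -> 'I_m) : Prop :=
  (forall a, M (r a) (c a)) /\
  (forall a b, M (r a) (c b) -> M (r b) (c a) -> a = b).

Lemma fooling_set_binary_rank_ge n m p (M : 'M[bool]_(n, m)) r c :
  @fooling_set n m p M r c -> binary_rank_ge M p.
Proof.
move=> [M_rc M_fool] k U V MUV; have ME := binary_factorizationE MUV.
have /fin_all_exists[f f_rect] a : exists l, U (r a) l && V l (c a).
  by apply/existsP; rewrite -ME.
have f_inj : injective f.
  move=> a b fab; have /andP[Ua Va] := f_rect a; have /andP[Ub Vb] := f_rect b.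
  by apply: M_fool; rewrite ME; apply/existsP; exists (f a); rewrite ?Ua ?Va ?fab ?Ub ?Vb.
by have := leq_card f f_inj; rewrite !card_ord.
Qed.

Definition diag_fooling n (M : 'M[bool]_n) : Prop := fooling_set M id id.

Definition block_diag_bmx m1 n1 m2 n2 (A : 'M[bool]_(m1, n1))
    (B : 'M[bool]_(m2, n2)) : 'M[bool]_(m1 + m2, n1 + n2) :=
  block_mx A (const_mx false) (const_mx false) B.

Lemma real_rank_block_diag m1 n1 m2 n2 (A : 'M[bool]_(m1, n1))
    (B : 'M[bool]_(m2, n2)) :
  real_rank (block_diag_bmx A B) = (real_rank A + real_rank B)%N.
Proof.
rewrite /real_rank /Defs.realmx /block_diag_bmx map_block_mx !map_const_mx -rank_diag_block_mx.
by congr (\rank (block_mx _ _ _ _)); apply/matrixP => i j; rewrite !mxE.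
Qed.

Lemma diag_fooling_block_diag m n (A : 'M[bool]_m) (B : 'M[bool]_n) :
  diag_fooling A -> diag_fooling B -> diag_fooling (block_diag_bmx A B).
Proof.
move=> [A_diag A_fool] [B_diag B_fool]; split=> [i | i j].
  by rewrite -(splitK i); case: (split i) => a; rewrite ?block_mxEul ?block_mxEdr.
rewrite -(splitK i) -(splitK j).
case: (split i) => a; case: (split j) => b /=.
- by rewrite !block_mxEul => ? ?; rewrite (A_fool a b).
- by rewrite block_mxEur mxE.
- by rewrite block_mxEdl mxE.
- by rewrite !block_mxEdr => ? ?; rewrite (B_fool a b).
Qed.

Fixpoint block_diag_pow n (A : 'M[bool]_n) d : 'M[bool]_(d * n) :=
  if d is d'.+1 then block_diag_bmx A (block_diag_pow A d') else const_mx false.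

Lemma real_rank_block_diag_pow n (A : 'M[bool]_n) d :
  real_rank (block_diag_pow A d) = (d * real_rank A)%N.
Proof.
elim: d => [|d IH] /=; first by apply/eqP; rewrite -leqn0 rank_leq_row.
by rewrite real_rank_block_diag IH mulSn.
Qed.

Lemma diag_fooling_block_diag_pow n (A : 'M[bool]_n) d :
  diag_fooling A -> diag_fooling (block_diag_pow A d).
Proof.
move=> A_fool; elim: d => [|d IH] /=; first by split=> -[].
exact: diag_fooling_block_diag.
Qed.

Lemma mxrank_one_sided_inverses (F : fieldType) m n r (M : 'M[F]_(m, n))
    (A : 'M_(m, r)) (B : 'M_(r, n)) (C : 'M_(r, m)) (D : 'M_(n, r)) :
  M = A *m B -> C *m A = 1%:M -> B *m D = 1%:M -> \rank M = r.
Proof.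
move=> defM CA1 BD1; apply/eqP; rewrite eqn_leq; apply/andP; split.
  by rewrite defM (leq_trans (mxrankM_maxl _ _)) ?rank_leq_col.
have CMD1 : C *m M *m D = 1%:M by rewrite defM mulmxA CA1 mul1mx BD1.
by rewrite -{1}(mxrank1 F r) -CMD1 (leq_trans (mxrankM_maxl _ _)) ?mxrankM_maxr.
Qed.

Definition C4_incidence : 'M[bool]_4 :=
  \matrix_(i < 4, j < 4) ((j == i :> nat) || (j == (i + 1) %% 4 :> nat)%N).

Lemma diag_fooling_C4_incidence : diag_fooling C4_incidence.
Proof.
split=> [i | i j]; rewrite !mxE; first by rewrite eqxx.
by case: i => [[|[|[|[|?]]]] ?]; case: j => [[|[|[|[|?]]]] ?] //=;
  move=> _ _; apply/val_inj.
Qed.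

Definition mx_of_seq (R : nzRingType) m n (s : seq (seq R)) : 'M[R]_(m, n) :=
  \matrix_(i, j) nth 0 (nth [::] s i) j.

Lemma real_rank_C4_incidence : real_rank C4_incidence = 3%N.
Proof.
(* Row 3 is row 0 - row 1 + row 2, and D inverts the first three rows. *)
pose A := @mx_of_seq Rdefinitions.R 4 3 [:: [:: 1; 0; 0]; [:: 0; 1; 0]; [:: 0; 0; 1]; [:: 1; -1; 1]].
pose B := @mx_of_seq Rdefinitions.R 3 4 [:: [:: 1; 1; 0; 0]; [:: 0; 1; 1; 0]; [:: 0; 0; 1; 1]].
pose C := @mx_of_seq Rdefinitions.R 3 4 [:: [:: 1; 0; 0; 0]; [:: 0; 1; 0; 0]; [:: 0; 0; 1; 0]].
pose D := @mx_of_seq Rdefinitions.R 4 3 [:: [:: 1; -1; 1]; [:: 0; 1; -1]; [:: 0; 0; 1]; [:: 0; 0; 0]].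
apply: (mxrank_one_sided_inverses (A := A) (B := B) (C := C) (D := D));
  apply/matrixP => i j; rewrite !mxE !big_ord_recr big_ord0 /= !mxE;
  by case: i => [[|[|[|[|?]]]] ?]; case: j => [[|[|[|[|?]]]] ?] //=; ring.
Qed.

Theorem theorem3 (d : nat) : (0 < d)%N ->
  exists (n m : nat) (M : 'M[bool]_(n, m)),
    binary_rank_ge M (4 * d) /\
    real_rank M = (3 * d)%N.
Proof.
move=> _; exists (d * 4)%N, (d * 4)%N, (block_diag_pow C4_incidence d); split.
  rewrite [(4 * d)%N]mulnC.
  have := diag_fooling_block_diag_pow d diag_fooling_C4_incidence.
  exact: fooling_set_binary_rank_ge.
by rewrite real_rank_block_diag_pow real_rank_C4_incidence mulnC.
Qed.
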